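(* Let $\mathcal C$ be a Markov category with conditionals and precise supports, and $o:I\to X$ a deterministic state. Then in $\mathrm{Cond}(\mathcal C)$ the conditioning effect $(:=o)=(X,\mathrm{id}_X,o):X\leadsto I$ satisfies $(:=o)\bullet\big((:=o)\otimes \mathrm{Id}_X\big)\bullet J(\mathrm{copy}_X)=(:=o)$; i.e. $(x:=o);(x:=o)\approx(x:=o)$, so the effect $(:=o)$ is copyable.
   Context: A Markov category is a symmetric monoidal category $(\mathcal C,\otimes,I)$ (assumed strict) in which every object $X$ carries a commutative comonoid $\mathrm{copy}_X$, $\mathrm{del}_X$ compatible with $\otimes$, and $I$ is terminal. A morphism $f$ is deterministic if $\mathrm{copy}_Y f=(f\otimes f)\mathrm{copy}_X$. $\langle f,g\rangle=(f\otimes g)\mathrm{copy}_A$; marginals $f_X=(\mathrm{id}_X\otimes\mathrm{del}_Y)f$, $f_Y=(\mathrm{del}_X\otimes\mathrm{id}_Y)f$. A conditional of $f:A\to X\otimes Y$ w.r.t. $X$ is $f|_X:X\otimes A\to Y$ with $f=(\mathrm{id}_X\otimes f|_X)(\mathrm{copy}_X\otimes\mathrm{id}_A)(f_X\otimes\mathrm{id}_A)\mathrm{copy}_A$ (symmetrically w.r.t. $Y$); $\mathcal C$ has conditionals if these always exist. $f=_\mu g$ means $\langle\mathrm{id},f\rangle\mu=\langle\mathrm{id},g\rangle\mu$; $\mu\ll\nu$ means $f=_\nu g\Rightarrow f=_\mu g$ for all $f,g$. Precise supports: for deterministic $x:I\to X$, $y:I\to Y$, any $f:X\to Y$, $\mu:I\to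 X$: $x\otimes y\ll\langle\mathrm{id}_X,f\rangle\mu$ iff ($x\ll\mu$ and $y\ll fx$). $\mathrm{Obs}(\mathcal C)$: same objects as $\mathcal C$; morphisms $X\leadsto Y$ are triples $(K,f,o)$, $f:X\to Y\otimes K$, $o:I\to K$ deterministic; identity $\mathrm{Id}_X=(I,\mathrm{id}_X,\mathrm{id}_I)$; composition $(K',f',o')\bullet(K,f,o)=(K'\otimes K,(f'\otimes\mathrm{id}_K)f,o'\otimes o)$; tensor of $(K,f,o):X\leadsto Y$, $(K',f',o'):X'\leadsto Y'$ is $(K'\otimes K,(\mathrm{id}_{Y'}\otimes\mathrm{swap}_{K',Y}\otimes\mathrm{id}_K)(f'\otimes f),o'\otimes o)$; $J(f)=(I,f,\mathrm{id}_I)$. For states $(K,\psi,o),(K',\psi',o'):I\leadsto X$, $(K,\psi,o)\sim(K',\psi',o')$ iff either ($o\ll\psi_K$, $o'\ll\psi'_{K'}$ and $\psi|_Ko=\psi'|_{K'}o'$, $\psi|_K:K\to X$ a conditional w.r.t. $K$) or ($o\not\ll\psi_K$ and $o'\not\ll\psi'_{K'}$). For $F,G:X\leadsto Y$, $F\approx G$ iff for every $A$ and every state $\Psi:I\leadsto A\otimes X$, $(\mathrm{Id}_A\otimes F)\bullet\Psi\sim(\mathrm{Id}_A\otimes G)\bullet\Psi$. $\mathrm{Cond}(\mathcal C)=\mathrm{Obs}(\mathcal C)/{\approx}$. *)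

Set Implicit Arguments.
Unset Strict Implicit.

(* Strictness: the associativity and unit laws hold as equalities of  *)
(* objects; morphisms are transported along them by [eqm].            *)
Record MkData := {
  Ob : Type;
  Hom : Ob -> Ob -> Type;
  idm : forall X, Hom X X;
  comp : forall X Y Z, Hom Y Z -> Hom X Y -> Hom X Z;
  tens : Ob -> Ob -> Ob;
  unitO : Ob;
  tensm : forall X Y X' Y', Hom X X' -> Hom Y Y' -> Hom (tens X Y) (tens X' Y');
  swap : forall X Y, Hom (tens X Y) (tens Y X);
  copy : forall X, Hom X (tens X X);
  del : forall X, Hom X unitO;
  ob_assoc : forall X Y Z, tens (tens X Y) Z = tens X (tens Y Z);
  ob_lunit : forall X, tens unitO X = X;
  ob_runit : forall X, tens X unitO = X
}.

Arguments Hom {m} _ _.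
Arguments idm {m} X.
Arguments comp {m X Y Z} _ _.
Arguments tens {m} _ _.
Arguments unitO {m}.
Arguments tensm {m X Y X' Y'} _ _.
Arguments swap {m} X Y.
Arguments copy {m} X.
Arguments del {m} X.
Arguments ob_assoc {m} X Y Z.
Arguments ob_lunit {m} X.
Arguments ob_runit {m} X.

Declare Scope mk_scope.
Delimit Scope mk_scope with mk.
Open Scope mk_scope.
Notation "g ∘ f" := (comp g f) (at level 40, left associativity) : mk_scope.
Notation "X ⊗ Y" := (tens X Y) (at level 35, right associativity) : mk_scope.
Notation "f ⊗m g" := (tensm f g) (at level 35, right associativity) : mk_scope.
Notation I := unitO.

Section Generic.
Context {D : MkData}.

Definition eqm {X Y : Ob D} (e : X = Y) : Hom X Y :=
  match e in _ = Y' return Hom X Y' with eq_refl => idm X end.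

(* middle swap (A⊗B)⊗(C⊗E) -> (A⊗C)⊗(B⊗E), i.e. id_A ⊗ swap_{B,C} ⊗ id_E *)
Definition msw (A B C E : Ob D) : Hom ((A ⊗ B) ⊗ (C ⊗ E)) ((A ⊗ C) ⊗ (B ⊗ E)) :=
  eqm (eq_sym (ob_assoc A C (B ⊗ E)))
  ∘ (idm A ⊗m (eqm (ob_assoc C B E) ∘ (swap B C ⊗m idm E)
                 ∘ eqm (eq_sym (ob_assoc B C E))))
  ∘ eqm (ob_assoc A B (C ⊗ E)).

End Generic.

Record MarkovAxioms (D : MkData) : Prop := {
  comp_assoc : forall (W X Y Z : Ob D) (h : Hom Y Z) (g : Hom X Y) (f : Hom W X),
      h ∘ (g ∘ f) = (h ∘ g) ∘ f;
  comp_id_l : forall (X Y : Ob D) (f : Hom X Y), idm Y ∘ f = f;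
  comp_id_r : forall (X Y : Ob D) (f : Hom X Y), f ∘ idm X = f;
  tens_id : forall X Y : Ob D, idm X ⊗m idm Y = idm (X ⊗ Y);
  tens_comp : forall (X Y Z X' Y' Z' : Ob D) (f : Hom X Y) (g : Hom Y Z)
      (f' : Hom X' Y') (g' : Hom Y' Z'),
      (g ∘ f) ⊗m (g' ∘ f') = (g ⊗m g') ∘ (f ⊗m f');
  tens_assoc : forall (X Y Z X' Y' Z' : Ob D) (f : Hom X X') (g : Hom Y Y') (h : Hom Z Z'),
      eqm (ob_assoc X' Y' Z') ∘ ((f ⊗m g) ⊗m h) = (f ⊗m (g ⊗m h)) ∘ eqm (ob_assoc X Y Z);
  tens_lunit : forall (X Y : Ob D) (f : Hom X Y),
      eqm (ob_lunit Y) ∘ (idm I ⊗m f) = f ∘ eqm (ob_lunit X);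
  tens_runit : forall (X Y : Ob D) (f : Hom X Y),
      eqm (ob_runit Y) ∘ (f ⊗m idm I) = f ∘ eqm (ob_runit X);
  swap_nat : forall (X Y X' Y' : Ob D) (f : Hom X X') (g : Hom Y Y'),
      swap X' Y' ∘ (f ⊗m g) = (g ⊗m f) ∘ swap X Y;
  swap_inv : forall X Y : Ob D, swap Y X ∘ swap X Y = idm (X ⊗ Y);
  swap_hex : forall X Y Z : Ob D,
      swap (X ⊗ Y) Z =
      eqm (ob_assoc Z X Y) ∘ (swap X Z ⊗m idm Y) ∘ eqm (eq_sym (ob_assoc X Z Y))
      ∘ (idm X ⊗m swap Y Z) ∘ eqm (ob_assoc X Y Z);
  swap_unit : forall X : Ob D,
      swap X I = eqm (eq_trans (ob_runit X) (eq_sym (ob_lunit X)));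
  copy_counit_l : forall X : Ob D,
      eqm (ob_lunit X) ∘ (del X ⊗m idm X) ∘ copy X = idm X;
  copy_counit_r : forall X : Ob D,
      eqm (ob_runit X) ∘ (idm X ⊗m del X) ∘ copy X = idm X;
  copy_coassoc : forall X : Ob D,
      eqm (ob_assoc X X X) ∘ (copy X ⊗m idm X) ∘ copy X = (idm X ⊗m copy X) ∘ copy X;
  copy_comm : forall X : Ob D, swap X X ∘ copy X = copy X;
  copy_tens : forall X Y : Ob D, copy (X ⊗ Y) = msw X X Y Y ∘ (copy X ⊗m copy Y);
  del_tens : forall X Y : Ob D, del (X ⊗ Y) = eqm (ob_lunit I) ∘ (del X ⊗m del Y);
  copy_unit : copy (@unitO D) = eqm (eq_sym (ob_lunit I));
  del_unit : del (@unitO D) = idm I;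
  unit_terminal : forall (X : Ob D) (f g : Hom X I), f = g
}.

Record MarkovCat := { mdata :> MkData; maxioms : MarkovAxioms mdata }.

Section Markov.
Context {D : MkData}.

Definition deterministic {X Y : Ob D} (f : Hom X Y) : Prop :=
  copy Y ∘ f = (f ⊗m f) ∘ copy X.

Definition pairm {A X Y : Ob D} (f : Hom A X) (g : Hom A Y) : Hom A (X ⊗ Y) :=
  (f ⊗m g) ∘ copy A.

Definition margL {A X Y : Ob D} (f : Hom A (X ⊗ Y)) : Hom A X :=
  eqm (ob_runit X) ∘ ((idm X ⊗m del Y) ∘ f).
Definition margR {A X Y : Ob D} (f : Hom A (X ⊗ Y)) : Hom A Y :=
  eqm (ob_lunit Y) ∘ ((del X ⊗m idm Y) ∘ f).

Definition IsCondL {A X Y : Ob D} (f : Hom A (X ⊗ Y)) (c : Hom (X ⊗ A) Y) : Prop :=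
  f = (idm X ⊗m c) ∘ eqm (ob_assoc X X A) ∘ (copy X ⊗m idm A)
      ∘ (margL f ⊗m idm A) ∘ copy A.

Definition IsCondR {A X Y : Ob D} (f : Hom A (X ⊗ Y)) (c : Hom (A ⊗ Y) X) : Prop :=
  f = (c ⊗m idm Y) ∘ eqm (eq_sym (ob_assoc A Y Y)) ∘ (idm A ⊗m copy Y)
      ∘ (idm A ⊗m margR f) ∘ copy A.

Definition HasConditionals : Prop :=
  forall (A X Y : Ob D) (f : Hom A (X ⊗ Y)),
    (exists c, IsCondL f c) /\ (exists c, IsCondR f c).

Definition as_eq {X Y : Ob D} (mu : Hom I X) (f g : Hom X Y) : Prop :=
  pairm (idm X) f ∘ mu = pairm (idm X) g ∘ mu.

Definition abscont {X : Ob D} (mu nu : Hom I X) : Prop :=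
  forall (Y : Ob D) (f g : Hom X Y), as_eq nu f g -> as_eq mu f g.

Definition stens {X Y : Ob D} (x : Hom I X) (y : Hom I Y) : Hom I (X ⊗ Y) :=
  (x ⊗m y) ∘ eqm (eq_sym (ob_lunit I)).

Definition PreciseSupports : Prop :=
  forall (X Y : Ob D) (x : Hom I X) (y : Hom I Y) (f : Hom X Y) (mu : Hom I X),
    deterministic x -> deterministic y ->
    (abscont (stens x y) (pairm (idm X) f ∘ mu) <-> (abscont x mu /\ abscont y (f ∘ x))).

Record ObsHom (X Y : Ob D) := {
  okern : Ob D;
  omor : Hom X (Y ⊗ okern);
  ostate : Hom I okern
}.

Definition obs_valid {X Y : Ob D} (F : ObsHom X Y) : Prop := deterministic (ostate F).

Definition obs_id (X : Ob D) : ObsHom X X :=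
  {| okern := I; omor := eqm (eq_sym (ob_runit X)); ostate := idm I |}.

Definition obs_comp {X Y Z : Ob D} (G : ObsHom Y Z) (F : ObsHom X Y) : ObsHom X Z :=
  {| okern := okern G ⊗ okern F;
     omor := eqm (ob_assoc Z (okern G) (okern F)) ∘ ((omor G ⊗m idm (okern F)) ∘ omor F);
     ostate := stens (ostate G) (ostate F) |}.

Definition obs_tens {X1 Y1 X2 Y2 : Ob D} (F1 : ObsHom X1 Y1) (F2 : ObsHom X2 Y2)
  : ObsHom (X1 ⊗ X2) (Y1 ⊗ Y2) :=
  {| okern := okern F1 ⊗ okern F2;
     omor := msw Y1 (okern F1) Y2 (okern F2) ∘ (omor F1 ⊗m omor F2);
     ostate := stens (ostate F1) (ostate F2) |}.

Definition obs_J {X Y : Ob D} (f : Hom X Y) : ObsHom X Y :=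
  {| okern := I; omor := eqm (eq_sym (ob_runit Y)) ∘ f; ostate := idm I |}.

Definition obs_castR {X Y Y' : Ob D} (e : Y = Y') (F : ObsHom X Y) : ObsHom X Y' :=
  match e in _ = Y'' return ObsHom X Y'' with eq_refl => F end.

Definition cond_eff {X : Ob D} (o : Hom I X) : ObsHom X I :=
  {| okern := X; omor := eqm (eq_sym (ob_lunit X)); ostate := o |}.

(* equivalence of states (K,psi,o), (K',psi',o') : I ~> X.
   psi|_K : K -> X is a conditional w.r.t. K (A = I, I ⊗ K = K). *)
Definition state_sim {X : Ob D} (S S' : ObsHom I X) : Prop :=
  (abscont (ostate S) (margR (omor S)) /\ abscont (ostate S') (margR (omor S')) /\
   forall (c : Hom (okern S) X) (c' : Hom (okern S') X),
     IsCondR (omor S) (c ∘ eqm (ob_lunit (okern S))) ->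
     IsCondR (omor S') (c' ∘ eqm (ob_lunit (okern S'))) ->
     c ∘ ostate S = c' ∘ ostate S')
  \/
  (~ abscont (ostate S) (margR (omor S)) /\ ~ abscont (ostate S') (margR (omor S'))).

Definition obs_equiv {X Y : Ob D} (F G : ObsHom X Y) : Prop :=
  forall (A : Ob D) (Psi : ObsHom I (A ⊗ X)), obs_valid Psi ->
    state_sim (obs_comp (obs_tens (obs_id A) F) Psi)
              (obs_comp (obs_tens (obs_id A) G) Psi).

End Markov.

(* Equivalence in Cond(C) cannot see a kernel that is embedded along a
   deterministic split monomorphism g (with retraction h): g ∘ x ≪ g ∘ μ iff
   x ≪ μ, and if c is a conditional of a state then c ∘ h is one of its image
   under g, so the conditional evaluated at the observation does not change.
   The effect (x:=o);(x:=o) is (x:=o) with its kernel X embedded into X ⊗ X by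
   copy (split by del ⊗ id), and its observation o ⊗ o is copy ∘ o because o
   is deterministic. *)

From Stdlib Require Import ProofIrrelevance Classical.

Section MarkovCategory.
Context {D : MkData} (MA : MarkovAxioms D).

Lemma compA {W X Y Z : Ob D} (h : Hom Y Z) (g : Hom X Y) (f : Hom W X) :
  h ∘ g ∘ f = h ∘ (g ∘ f).
Proof. symmetry; apply (comp_assoc MA). Qed.
Lemma idm_comp {X Y : Ob D} (f : Hom X Y) : idm Y ∘ f = f.
Proof. apply (comp_id_l MA). Qed.
Lemma comp_idm {X Y : Ob D} (f : Hom X Y) : f ∘ idm X = f.
Proof. apply (comp_id_r MA). Qed.
Lemma tensm_idm (X Y : Ob D) : idm X ⊗m idm Y = idm (X ⊗ Y).
Proof. apply (tens_id MA). Qed.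
Lemma tensm_comp {X Y Z X' Y' Z' : Ob D} (f : Hom X Y) (g : Hom Y Z)
    (f' : Hom X' Y') (g' : Hom Y' Z') :
  (g ∘ f) ⊗m (g' ∘ f') = (g ⊗m g') ∘ (f ⊗m f').
Proof. apply (tens_comp MA). Qed.
Lemma tensm_comp_r {W X Y Z X' Y' Z' : Ob D} (f : Hom X Y) (g : Hom Y Z)
    (f' : Hom X' Y') (g' : Hom Y' Z') (k : Hom W _) :
  (g ⊗m g') ∘ ((f ⊗m f') ∘ k) = ((g ∘ f) ⊗m (g' ∘ f')) ∘ k.
Proof. rewrite <- compA, tensm_comp. reflexivity. Qed.
Lemma tensm_compl {X Y Z X' Y' : Ob D} (g : Hom X Y) (f : Hom Y Z) (h : Hom X' Y') :
  (f ∘ g) ⊗m h = (f ⊗m h) ∘ (g ⊗m idm X').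
Proof. rewrite <- tensm_comp, comp_idm. reflexivity. Qed.
Lemma tensm_compr {X Y Z X' Y' : Ob D} (g : Hom X Y) (f : Hom Y Z) (h : Hom X' Y') :
  h ⊗m (f ∘ g) = (h ⊗m f) ∘ (idm X' ⊗m g).
Proof. rewrite <- tensm_comp, comp_idm. reflexivity. Qed.
Lemma tensm_split {X Y X' Y' : Ob D} (f : Hom X Y) (g : Hom X' Y') :
  f ⊗m g = (idm Y ⊗m g) ∘ (f ⊗m idm X').
Proof. rewrite <- tensm_comp, idm_comp, comp_idm. reflexivity. Qed.

Lemma eqm_refl {X : Ob D} (e : X = X) : eqm e = idm X.
Proof. rewrite (proof_irrelevance _ e eq_refl). reflexivity. Qed.
Lemma eqm_irrelevance {X Y : Ob D} (e1 e2 : X = Y) : eqm e1 = eqm e2.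
Proof. rewrite (proof_irrelevance _ e1 e2). reflexivity. Qed.
Lemma eqm_trans {X Y Z : Ob D} (e1 : X = Y) (e2 : Y = Z) :
  eqm e2 ∘ eqm e1 = eqm (eq_trans e1 e2).
Proof. destruct e2, e1. apply idm_comp. Qed.
Lemma eqm_trans_r {W X Y Z : Ob D} (e1 : X = Y) (e2 : Y = Z) (f : Hom W X) :
  eqm e2 ∘ (eqm e1 ∘ f) = eqm (eq_trans e1 e2) ∘ f.
Proof. rewrite <- eqm_trans, compA. reflexivity. Qed.
Lemma eqm_symK_r {W X Y : Ob D} (e : X = Y) (f : Hom W X) : eqm (eq_sym e) ∘ (eqm e ∘ f) = f.
Proof. rewrite eqm_trans_r, eqm_refl. apply idm_comp. Qed.
Lemma eqm_tens {X Y X' Y' : Ob D} (e1 : X = X') (e2 : Y = Y') :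
  eqm e1 ⊗m eqm e2 = eqm (f_equal2 tens e1 e2).
Proof. destruct e1, e2. rewrite !eqm_refl. apply tensm_idm. Qed.
Lemma idm_tens_eqm {X Y Y' : Ob D} (e : Y = Y') :
  idm X ⊗m eqm e = eqm (f_equal (tens X) e).
Proof. destruct e. rewrite !eqm_refl. apply tensm_idm. Qed.
Lemma eqm_tens_idm {X X' Y : Ob D} (e : X = X') :
  eqm e ⊗m idm Y = eqm (f_equal (fun Z => Z ⊗ Y) e).
Proof. destruct e. rewrite !eqm_refl. apply tensm_idm. Qed.

(* Composing with [idm] gives every chain a tail [k], so that the [_r] lemmas
   below apply to its last factor. *)
Lemma eq_comp_idm {X Y : Ob D} (f g : Hom X Y) : f ∘ idm X = g ∘ idm X -> f = g.
Proof. rewrite !comp_idm. trivial. Qed.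

Ltac coherence :=
  repeat progress rewrite ?compA, ?eqm_trans_r, ?eqm_trans, ?eqm_refl, ?idm_comp,
    ?tensm_idm, ?eqm_tens, ?idm_tens_eqm, ?eqm_tens_idm.

Lemma tensm_lunit {X Y : Ob D} (f : Hom X Y) :
  idm I ⊗m f = eqm (eq_sym (ob_lunit Y)) ∘ (f ∘ eqm (ob_lunit X)).
Proof. rewrite <- (tens_lunit MA). symmetry. apply eqm_symK_r. Qed.
Lemma tensm_runit {X Y : Ob D} (f : Hom X Y) :
  f ⊗m idm I = eqm (eq_sym (ob_runit Y)) ∘ (f ∘ eqm (ob_runit X)).
Proof. rewrite <- (tens_runit MA). symmetry. apply eqm_symK_r. Qed.

Lemma tensm_assoc_r {W X Y Z X' Y' Z' : Ob D} (f : Hom X X') (g : Hom Y Y') (h : Hom Z Z')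
    (k : Hom W _) :
  eqm (ob_assoc X' Y' Z') ∘ (((f ⊗m g) ⊗m h) ∘ k)
  = (f ⊗m (g ⊗m h)) ∘ (eqm (ob_assoc X Y Z) ∘ k).
Proof. rewrite <- !compA, (tens_assoc MA). reflexivity. Qed.
Lemma tensm_assocV_r {W X Y Z X' Y' Z' : Ob D} (f : Hom X X') (g : Hom Y Y') (h : Hom Z Z')
    (k : Hom W _) :
  eqm (eq_sym (ob_assoc X' Y' Z')) ∘ ((f ⊗m (g ⊗m h)) ∘ k)
  = ((f ⊗m g) ⊗m h) ∘ (eqm (eq_sym (ob_assoc X Y Z)) ∘ k).
Proof.
  rewrite <- (eqm_symK_r (ob_assoc X' Y' Z') ((f ⊗m g) ⊗m h ∘ _)), tensm_assoc_r.
  coherence. reflexivity.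
Qed.

Lemma msw_nat {A B C E A' B' C' E' : Ob D}
    (a : Hom A A') (b : Hom B B') (c : Hom C C') (e : Hom E E') :
  msw A' B' C' E' ∘ ((a ⊗m b) ⊗m (c ⊗m e)) = ((a ⊗m c) ⊗m (b ⊗m e)) ∘ msw A B C E.
Proof.
  assert (middle_nat :
    (eqm (ob_assoc C' B' E') ∘ ((swap B' C' ⊗m idm E') ∘ eqm (eq_sym (ob_assoc B' C' E'))))
      ∘ (b ⊗m (c ⊗m e))
    = (c ⊗m (b ⊗m e))
      ∘ (eqm (ob_assoc C B E) ∘ ((swap B C ⊗m idm E) ∘ eqm (eq_sym (ob_assoc B C E))))).
  { apply eq_comp_idm. coherence.
    rewrite tensm_assocV_r, tensm_comp_r, (swap_nat MA), idm_comp, tensm_compl.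
    coherence. rewrite tensm_assoc_r. reflexivity. }
  unfold msw. apply eq_comp_idm.
  rewrite !compA, tensm_assoc_r, tensm_comp_r, middle_nat, idm_comp, tensm_compr.
  coherence. rewrite tensm_assocV_r. reflexivity.
Qed.

Lemma deterministic_idm (X : Ob D) : deterministic (idm X).
Proof. unfold deterministic. rewrite comp_idm, tensm_idm, idm_comp. reflexivity. Qed.
Lemma deterministic_eqm {X Y : Ob D} (e : X = Y) : deterministic (eqm e).
Proof. destruct e. apply deterministic_idm. Qed.
Lemma deterministic_comp {X Y Z : Ob D} (f : Hom X Y) (g : Hom Y Z) :
  deterministic f -> deterministic g -> deterministic (g ∘ f).
Proof.
  unfold deterministic. intros Hf Hg.
  rewrite <- compA, Hg, compA, Hf, <- compA, tensm_comp. reflexivity.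
Qed.
Lemma deterministic_tensm {X Y X' Y' : Ob D} (f : Hom X Y) (g : Hom X' Y') :
  deterministic f -> deterministic g -> deterministic (f ⊗m g).
Proof.
  unfold deterministic. intros Hf Hg.
  rewrite !(copy_tens MA), compA, <- tensm_comp, Hf, Hg, tensm_comp, <- compA, msw_nat.
  apply compA.
Qed.
Lemma deterministic_comp_r {X Y W : Ob D} (g : Hom X Y) (k : Hom W X) : deterministic g ->
  copy Y ∘ (g ∘ k) = (g ⊗m g) ∘ (copy X ∘ k).
Proof. unfold deterministic. intro H. rewrite <- !compA, H. reflexivity. Qed.

(* Both sides of the determinism equation for [copy X] are the four-fold copy,
   which is invariant under swapping its two middle outputs. *)
Lemma deterministic_copy (X : Ob D) : deterministic (copy X).
Proof.
  assert (coassoc : forall W (k : Hom W X),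
    (copy X ⊗m idm X) ∘ (copy X ∘ k)
    = eqm (eq_sym (ob_assoc X X X)) ∘ ((idm X ⊗m copy X) ∘ (copy X ∘ k))).
  { intros W k. rewrite <- (compA (idm X ⊗m copy X)), <- (copy_coassoc MA).
    coherence. reflexivity. }
  assert (copy4 : (copy X ⊗m copy X) ∘ copy X
    = eqm (eq_sym (ob_assoc X X (X ⊗ X)))
      ∘ ((idm X ⊗m ((idm X ⊗m copy X) ∘ copy X)) ∘ copy X)).
  { apply eq_comp_idm. rewrite tensm_split. coherence. rewrite coassoc, tensm_compr.
    coherence. rewrite tensm_assocV_r, tensm_idm. reflexivity. }
  assert (swap_middle :
    eqm (ob_assoc X X X) ∘ ((swap X X ⊗m idm X)
      ∘ (eqm (eq_sym (ob_assoc X X X)) ∘ ((idm X ⊗m copy X) ∘ copy X)))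
    = (idm X ⊗m copy X) ∘ copy X).
  { rewrite <- (copy_coassoc MA). coherence.
    rewrite tensm_comp_r, (copy_comm MA), idm_comp. reflexivity. }
  unfold deterministic. rewrite (copy_tens MA), compA, copy4. unfold msw. coherence.
  rewrite tensm_comp_r, idm_comp. coherence. rewrite swap_middle. reflexivity.
Qed.

Lemma margR_idm_tensm {Y K K' : Ob D} (g : Hom K' K) (psi : Hom I (Y ⊗ K')) :
  margR ((idm Y ⊗m g) ∘ psi) = g ∘ margR psi.
Proof.
  unfold margR. rewrite <- (compA (del Y ⊗m idm K)), <- tensm_comp, idm_comp, comp_idm.
  rewrite tensm_split, tensm_lunit. coherence. reflexivity.
Qed.

Lemma margR_pairm_idm {W K Y : Ob D} (c : Hom K Y) (x : Hom W K) :
  margR (pairm (idm K) c ∘ x) = c ∘ x.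
Proof.
  unfold margR, pairm. coherence. rewrite tensm_comp_r, idm_comp, comp_idm.
  rewrite tensm_split, tensm_lunit. coherence.
  rewrite <- (compA (del K ⊗m idm K)), <- (compA (eqm (ob_lunit K))),
    <- (compA (eqm (ob_lunit K)) (del K ⊗m idm K)), (copy_counit_l MA).
  rewrite !idm_comp. reflexivity.
Qed.

Lemma pairm_idm_swap {Y K : Ob D} (c : Hom K Y) (m : Hom I K) :
  pairm (idm K) c ∘ m = swap Y K ∘ ((c ⊗m idm K) ∘ (copy K ∘ m)).
Proof.
  unfold pairm. rewrite compA, <- (compA (swap Y K) (c ⊗m idm K)), (swap_nat MA), compA.
  rewrite <- (compA (swap K K) (copy K) m), (copy_comm MA). reflexivity.
Qed.

Lemma IsCondR_state {Y K : Ob D} (psi : Hom I (Y ⊗ K)) (c : Hom K Y) :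
  IsCondR psi (c ∘ eqm (ob_lunit K)) <-> psi = (c ⊗m idm K) ∘ (copy K ∘ margR psi).
Proof.
  unfold IsCondR. rewrite tensm_compl, !tensm_lunit, (copy_unit MA).
  coherence. rewrite !comp_idm. reflexivity.
Qed.

Lemma IsCondR_state_unique {Y K : Ob D} (psi : Hom I (Y ⊗ K)) (c1 c2 : Hom K Y) (x : Hom I K) :
  IsCondR psi (c1 ∘ eqm (ob_lunit K)) -> IsCondR psi (c2 ∘ eqm (ob_lunit K)) ->
  abscont x (margR psi) -> c1 ∘ x = c2 ∘ x.
Proof.
  rewrite !IsCondR_state. intros H1 H2 Hx.
  assert (E : as_eq (margR psi) c1 c2).
  { unfold as_eq. rewrite !pairm_idm_swap, <- H1, <- H2. reflexivity. }
  rewrite <- (margR_pairm_idm c1), <- (margR_pairm_idm c2). f_equal. exact (Hx _ _ _ E).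
Qed.

Section SplitMono.
Context {K K' : Ob D} {g : Hom K' K} {h : Hom K K'}.
Hypotheses (g_det : deterministic g) (hg : h ∘ g = idm K').

Lemma pairm_idm_deterministic {Z W : Ob D} (f : Hom K Z) (m : Hom W K') :
  pairm (idm K) f ∘ (g ∘ m) = (g ⊗m idm Z) ∘ (pairm (idm K') (f ∘ g) ∘ m).
Proof.
  unfold pairm. coherence. rewrite deterministic_comp_r by exact g_det.
  rewrite !tensm_comp_r. coherence. rewrite comp_idm. reflexivity.
Qed.

Lemma split_mono_tensm_cancel {Z W : Ob D} (k : Hom W (K' ⊗ Z)) :
  (h ⊗m idm Z) ∘ ((g ⊗m idm Z) ∘ k) = k.
Proof. rewrite tensm_comp_r, hg, idm_comp, tensm_idm, idm_comp. reflexivity. Qed.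

Lemma as_eq_split_mono {Z : Ob D} (mu : Hom I K') (f1 f2 : Hom K Z) :
  as_eq (g ∘ mu) f1 f2 <-> as_eq mu (f1 ∘ g) (f2 ∘ g).
Proof.
  unfold as_eq. rewrite !pairm_idm_deterministic. split; intro E.
  - apply (f_equal (fun t => (h ⊗m idm Z) ∘ t)) in E.
    rewrite !split_mono_tensm_cancel in E. exact E.
  - rewrite E. reflexivity.
Qed.

Lemma abscont_split_mono (x mu : Hom I K') :
  abscont (g ∘ x) (g ∘ mu) <-> abscont x mu.
Proof.
  unfold abscont. split; intros H Z f1 f2 E.
  - rewrite <- (comp_idm f1), <- (comp_idm f2), <- hg, <- !compA, <- as_eq_split_mono.
    apply H. rewrite as_eq_split_mono, !compA, hg, !comp_idm. exact E.
  - rewrite as_eq_split_mono. apply H. rewrite <- as_eq_split_mono. exact E.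
Qed.

Lemma IsCondR_split_mono {Y : Ob D} (psi : Hom I (Y ⊗ K')) (c : Hom K' Y) :
  IsCondR psi (c ∘ eqm (ob_lunit K')) ->
  IsCondR ((idm Y ⊗m g) ∘ psi) ((c ∘ h) ∘ eqm (ob_lunit K)).
Proof.
  rewrite !IsCondR_state, margR_idm_tensm. intro H.
  rewrite deterministic_comp_r by exact g_det.
  rewrite tensm_comp_r, compA, hg, comp_idm, idm_comp.
  rewrite H at 1. rewrite tensm_comp_r, idm_comp, comp_idm. reflexivity.
Qed.

End SplitMono.

Lemma state_sim_split_mono {Y : Ob D} (S S' : ObsHom I Y)
    (g : Hom (okern S') (okern S)) (h : Hom (okern S) (okern S')) :
  deterministic g -> h ∘ g = idm _ ->
  omor S = (idm Y ⊗m g) ∘ omor S' -> ostate S = g ∘ ostate S' -> state_sim S S'.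
Proof.
  destruct S as [K psi x], S' as [K' psi' x']; cbn in *. intros g_det hg -> ->.
  unfold state_sim; cbn.
  rewrite margR_idm_tensm, (abscont_split_mono g_det hg).
  destruct (classic (abscont x' (margR psi'))) as [Hx | Hx]; [left | right; tauto].
  repeat split; try exact Hx.
  intros c c' Hc Hc'.
  (* [c' ∘ h] is a conditional of the embedded state, so it agrees with [c] there. *)
  transitivity ((c' ∘ h) ∘ (g ∘ x')).
  - apply (IsCondR_state_unique ((idm Y ⊗m g) ∘ psi')); [exact Hc | |].
    + exact (IsCondR_split_mono g_det hg _ _ Hc').
    + rewrite margR_idm_tensm, (abscont_split_mono g_det hg). exact Hx.
  - rewrite compA, <- (compA h), hg, idm_comp. reflexivity.
Qed.

Lemma stens_comp {X Y X' Y' : Ob D} (f : Hom X X') (g : Hom Y Y') (x : Hom I X) (y : Hom I Y) :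
  stens (f ∘ x) (g ∘ y) = (f ⊗m g) ∘ stens x y.
Proof. unfold stens. rewrite tensm_comp. apply compA. Qed.

Lemma stens_idm_r {X : Ob D} (x : Hom I X) : stens x (idm I) = eqm (eq_sym (ob_runit X)) ∘ x.
Proof. unfold stens. rewrite tensm_runit. coherence. rewrite comp_idm. reflexivity. Qed.

Lemma copy_deterministic_state {X : Ob D} (x : Hom I X) :
  deterministic x -> copy X ∘ x = stens x x.
Proof. intro x_det. rewrite x_det. unfold stens. rewrite (copy_unit MA). reflexivity. Qed.

Lemma obs_equiv_split_mono {X Y : Ob D} (F F' : ObsHom X Y)
    (g : Hom (okern F') (okern F)) (h : Hom (okern F) (okern F')) :
  deterministic g -> h ∘ g = idm _ ->
  omor F = (idm Y ⊗m g) ∘ omor F' -> ostate F = g ∘ ostate F' -> obs_equiv F F'.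
Proof.
  intros g_det hg Hm Hs A Psi _.
  apply (state_sim_split_mono (obs_comp (obs_tens (obs_id A) F) Psi)
    (obs_comp (obs_tens (obs_id A) F') Psi)
    ((idm I ⊗m g) ⊗m idm (okern Psi)) ((idm I ⊗m h) ⊗m idm (okern Psi))).
  - apply deterministic_tensm; [apply deterministic_tensm |]; auto using deterministic_idm.
  - cbn [okern obs_comp obs_tens obs_id].
    rewrite <- !tensm_comp, hg, !idm_comp, !tensm_idm. reflexivity.
  - cbn [omor okern obs_comp obs_tens obs_id]. rewrite Hm.
    rewrite <- (idm_comp (eqm (eq_sym (ob_runit A)))) at 1.
    rewrite tensm_comp, <- (tensm_idm A I), <- (compA (msw A I Y (okern F))), msw_nat.
    rewrite !tensm_compl, !compA, tensm_assoc_r, !tensm_idm. reflexivity.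
  - cbn [ostate okern obs_comp obs_tens obs_id]. rewrite Hs.
    rewrite <- (idm_comp (idm I)) at 1. rewrite <- (idm_comp (ostate Psi)) at 1.
    rewrite !stens_comp. reflexivity.
Qed.

Lemma obs_castR_eq {X Y Y' : Ob D} (e : Y = Y') (F : ObsHom X Y) :
  obs_castR e F =
  {| okern := okern F; omor := eqm (f_equal (fun Z => Z ⊗ okern F) e) ∘ omor F;
     ostate := ostate F |}.
Proof. destruct e, F. cbn. rewrite idm_comp. reflexivity. Qed.

Definition cond_eff_twice {X : Ob D} (o : Hom I X) : ObsHom X I :=
  obs_comp (obs_comp (cond_eff o) (obs_castR (ob_lunit X) (obs_tens (cond_eff o) (obs_id X))))
           (obs_J (copy X)).

Lemma cond_eff_twice_split_mono {X : Ob D} (o : Hom I X) : deterministic o ->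
  exists a : (X ⊗ X = okern (cond_eff_twice o)),
    omor (cond_eff_twice o) = (idm I ⊗m (eqm a ∘ copy X)) ∘ omor (cond_eff o) /\
    ostate (cond_eff_twice o) = (eqm a ∘ copy X) ∘ ostate (cond_eff o).
Proof.
  intro o_det. unfold cond_eff_twice. rewrite obs_castR_eq.
  cbn [omor ostate okern obs_comp obs_tens obs_id cond_eff obs_J].
  unfold msw. rewrite !tensm_lunit, !tensm_runit. coherence.
  (* the two copies of [X] reach the kernel in swapped order *)
  rewrite (copy_comm MA).
  exists (eq_trans (f_equal (tens X) (eq_sym (ob_runit X))) (eq_sym (ob_runit _))). split.
  - rewrite tensm_lunit. coherence. rewrite comp_idm. f_equal. apply eqm_irrelevance.
  - rewrite compA, copy_deterministic_state by exact o_det.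
    rewrite !stens_idm_r, <- (idm_comp o) at 1. rewrite stens_comp. coherence.
    reflexivity.
Qed.
End MarkovCategory.

Theorem mainTheorem8 :
  forall (C : MarkovCat), @HasConditionals C -> @PreciseSupports C ->
  forall (X : Ob C) (o : Hom (@unitO C) X), deterministic o ->
    obs_equiv
      (obs_comp
         (obs_comp (cond_eff o)
                   (obs_castR (ob_lunit X) (obs_tens (cond_eff o) (obs_id X))))
         (obs_J (copy X)))
      (cond_eff o).
Proof.
  intros C _ _ X o o_det. pose proof (maxioms C) as MA.
  destruct (cond_eff_twice_split_mono MA o o_det) as [a [Hmor Hstate]].
  apply (obs_equiv_split_mono MA (cond_eff_twice o) (cond_eff o) (eqm a ∘ copy X)
           (eqm (ob_lunit X) ∘ ((del X ⊗m idm X) ∘ eqm (eq_sym a)))).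
  - apply (deterministic_comp MA); [apply deterministic_copy | apply deterministic_eqm]; exact MA.
  - rewrite !(compA MA), (eqm_symK_r MA), <- (compA MA). apply (copy_counit_l MA).
  - exact Hmor.
  - exact Hstate.
Qed.
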